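(* For positive integers $n$ and $k$, $C_{-2n}^{(2k-1)}$ equals the number of integer sequences $a_1\le a_2\ge a_3\le a_4\ge\cdots\ge a_{2n-1}$ with $1\le a_i\le k$ for all $i$.
   Context: For $N\ge0$, $C_N^{(K)}$ is the number of lattice paths with steps $(1,1),(1,-1)$ from $(0,0)$ to $(N,0)$ never going below the $x$-axis nor above $y=K$. For odd $K$ the generating function $F(x)=\sum_{N\ge0}C_N^{(K)}x^N$ is a rational function $p/q$ with $\deg p<\deg q$, $q(0)\neq0$; values at negative indices are defined by extending the linear recurrence backwards, equivalently $\sum_{N\ge1}C_{-N}^{(K)}x^N=-F(1/x)$. *)

From HB Require Import structures.
From mathcomp Require Import all_boot all_order all_algebra.
Set Implicit Arguments. Unset Strict Implicit. Unset Printing Implicit Defensive.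
Import Order.TTheory GRing.Theory Num.Theory.
Local Open Scope ring_scope.

(* A lattice path with steps (1,1),(1,-1) of length N is a sequence of N
   booleans (true = up step (1,1), false = down step (1,-1)). *)
Definition step (b : bool) : int := if b then 1 else -1.

Definition height (s : seq bool) : int := \sum_(b <- s) step b.

Definition bounded_path (K : nat) (s : seq bool) : bool :=
  [forall i : 'I_(size s).+1,
     (0 <= height (take i s)) && (height (take i s) <= K%:Z)]
  && (height s == 0).

Definition C (K N : nat) : nat :=
  #|[set t : N.-tuple bool | bounded_path K t]|.

(* q is a denominator as in the paper: F = p/q with q(0) <> 0 and
   deg p < deg q, i.e. the coefficients of q * F vanish in degrees
   N >= deg q (then p is the truncation of q*F). *)
Definition is_denominator (K : nat) (q : {poly rat}) : Prop :=
  q`_0 != 0 /\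
  forall N : nat, ((size q).-1 <= N)%N ->
    \sum_(j < size q) q`_j * (C K (N - j)%N)%:R = 0.

(* c : int -> rat is the extension of (C_N^{(K)})_{N>=0} to all integer
   indices obtained by extending the linear recurrence given by a
   denominator q backwards (the recurrence is required at every index). *)
Definition extends_C (K : nat) (c : int -> rat) : Prop :=
  (forall N : nat, c N%:Z = (C K N)%:R) /\
  exists q : {poly rat}, is_denominator K q /\
    forall N : int, \sum_(j < size q) q`_j * c (N - j%:Z) = 0.

(* number of integer sequences a_1 <= a_2 >= a_3 <= a_4 >= ... a_{2n-1}
   with 1 <= a_i <= k.  f i : 'I_k stands for a_{i+1} - 1 (0-based). *)
Definition count_alt (n k : nat) : nat :=
  #|[set f : {ffun 'I_(2 * n - 1) -> 'I_k} |
      [forall i : 'I_(2 * n - 1), forall j : 'I_(2 * n - 1),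
         (nat_of_ord j == i.+1)%N ==>
           (if odd i then (f j <= f i)%N else (f i <= f j)%N)]]|.

From HB Require Import structures.
From mathcomp Require Import all_boot all_order all_algebra.
From mathcomp Require Import zify ring.
Set Implicit Arguments. Unset Strict Implicit. Unset Printing Implicit Defensive.
Import Order.TTheory GRing.Theory Num.Theory.

(* Let K = 2k-1 and let A be the
   adjacency matrix of the path graph on {0, ..., K}; then C_N^(K) is the
   (0,0) entry of A^N.  Conjugating by the diagonal sign matrix
   diag(+,+,-,-,+,+,...) gives a matrix A' with the same (0,0) entries of
   powers, and since K is odd A' has an explicit 0/1 inverse B.  By
   Cayley-Hamilton, N |-> (A'^N)_00, extended to negative N by B^|N|,
   satisfies the recurrence given by the reversed characteristic polynomial,
   whose constant term is 1; such a backward extension is unique, since any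
   recurrence with nonzero constant term can be run backwards.  Finally the
   entries of B^m count zigzag sequences, so (B^2n)_00 = count_alt n k. *)

Lemma card_set_sum (T : finType) (P : pred T) :
  #|[set x | P x]| = \sum_(x : T) (P x : nat).
Proof.
rewrite -sum1_card big_mkcond /=.
by apply: eq_bigr => x _; rewrite inE; case: (P x).
Qed.

Lemma card_tuple_cons (T : finType) (N : nat) (P : seq T -> bool) :
  #|[set t : N.+1.-tuple T | P t]| =
  \sum_(x : T) #|[set t : N.-tuple T | P (x :: t)]|.
Proof.
rewrite card_set_sum.
under [RHS]eq_bigr => x _ do rewrite (card_set_sum (fun t : N.-tuple T => P (x :: t))).
rewrite pair_big /= (reindex (fun p : T * N.-tuple T => [tuple of p.1 :: p.2])) /=.
  by apply: eq_bigr => -[x t].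
exists (fun t : N.+1.-tuple T => (thead t, [tuple of behead t])).
  by move=> [x t] _ /=; congr pair; exact: val_inj.
by move=> t _ /=; rewrite [in RHS](tuple_eta t).
Qed.

Lemma card_tuple_nil (T : finType) (P : seq T -> bool) :
  #|[set t : 0.-tuple T | P t]| = P [::].
Proof.
rewrite (card_set_sum (fun t : 0.-tuple T => P t)) (big_pred1 [tuple]) //.
by move=> t; rewrite /= [t]tuple0; apply/esym/eqP.
Qed.

Lemma card_andb (T : finType) (c : bool) (Q : pred T) :
  #|[set t | c && Q t]| = c * #|[set t | Q t]|.
Proof.
case: c; first by rewrite mul1n; apply: eq_card => t; rewrite !inE.
by rewrite mul0n; apply/eqP; rewrite cards_eq0; apply/eqP/setP => t; rewrite !inE.
Qed.

Lemma forall_iota n (P : nat -> bool) :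
  [forall i : 'I_n, P i] = all P (iota 0 n).
Proof.
apply/forallP/allP => H i.
  by rewrite mem_iota /= add0n => lt_in; exact: (H (Ordinal lt_in)).
by apply: H; rewrite mem_iota /= add0n ltn_ord.
Qed.

Lemma all_iotaS (P : nat -> bool) n m :
  all P (iota m n.+1) = P m && all (fun i => P i.+1) (iota m n).
Proof. by rewrite /= -add1n iotaDl all_map. Qed.

Fixpoint path_from (K h : nat) (s : seq bool) : bool :=
  match s with
  | [::] => h == 0
  | b :: s' => (h <= K) &&
               (if b then path_from K h.+1 s' else (0 < h) && path_from K h.-1 s')
  end.

Lemma height_cons b s : height (b :: s) = (step b + height s)%R.
Proof. by rewrite /height big_cons. Qed.

Lemma height_nil : height [::] = 0%R.
Proof. by rewrite /height big_nil. Qed.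

Local Open Scope ring_scope.

Definition path_fromz (K : nat) (h : int) (s : seq bool) : bool :=
  all (fun i => (0 <= h + height (take i s)) && (h + height (take i s) <= K%:Z))
      (iota 0 (size s).+1) && (h + height s == 0).

Lemma path_fromz_cons K h b s :
  path_fromz K h (b :: s) = (0 <= h) && (h <= K%:Z) && path_fromz K (h + step b) s.
Proof.
rewrite /path_fromz [size _]/= all_iotaS take0 height_nil addr0.
under eq_all => i do rewrite [take _ _]/= height_cons addrA.
by rewrite height_cons addrA !andbA.
Qed.

Lemma path_fromz_nil K h : path_fromz K h [::] = (h == 0).
Proof.
rewrite /path_fromz /= height_nil addr0 andbT.
by apply/idP/idP => [/andP[_ ->]//|/eqP -> /=].
Qed.

Lemma path_fromzE K s (h : nat) : path_fromz K h%:Z s = path_from K h s.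
Proof.
elim: s h => [|b s IH] h; first by rewrite path_fromz_nil.
rewrite path_fromz_cons [path_from _ _ _]/= lez_nat; congr andb.
case: b; first by rewrite -IH /step; congr path_fromz; lia.
case: h => [|h]; last by rewrite -IH /step; congr path_fromz; lia.
by rewrite /= /step add0r /path_fromz all_iotaS /= take0 height_nil addr0.
Qed.

Lemma bounded_pathE K s : bounded_path K s = path_from K 0 s.
Proof.
rewrite -path_fromzE /bounded_path /path_fromz add0r.
rewrite (forall_iota _ (fun i => (0 <= height (take i s)) && (height (take i s) <= K%:Z))).
by congr andb; apply: eq_all => i; rewrite add0r.
Qed.

Local Close Scope ring_scope.

Fixpoint npaths (K N h : nat) : nat :=
  match N with
  | 0 => h == 0
  | N'.+1 => (h <= K) * (npaths K N' h.+1 + (0 < h) * npaths K N' h.-1)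
  end.

Lemma card_path_from K N h :
  #|[set t : N.-tuple bool | path_from K h t]| = npaths K N h.
Proof.
elim: N h => [|N IH] h; first by rewrite (card_tuple_nil (path_from K h)).
rewrite (card_tuple_cons N (path_from K h)) big_bool /=.
rewrite (card_andb _ (fun t : N.-tuple bool => path_from K h.+1 t)).
rewrite (card_andb _ (fun t : N.-tuple bool => (0 < h) && path_from K h.-1 t)).
by rewrite (card_andb _ (fun t : N.-tuple bool => path_from K h.-1 t)) !IH mulnDr.
Qed.

Lemma C_npaths K N : C K N = npaths K N 0.
Proof. by rewrite /C -card_path_from; apply: eq_card => t; rewrite !inE bounded_pathE. Qed.

Definition zig (p : bool) (x y : nat) : bool := if p then y <= x else x <= y.

Fixpoint zigzag_from (k : nat) (p : bool) (x : nat) (s : seq 'I_k) : bool :=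
  match s with
  | [::] => true
  | y :: s' => zig p x y && zigzag_from (~~ p) y s'
  end.

Fixpoint nzigzag (k : nat) (p : bool) (m x : nat) : nat :=
  match m with
  | 0 => 1
  | m'.+1 => \sum_(y < k) zig p x y * nzigzag k (~~ p) m' y
  end.

Lemma card_zigzag_from k m p x :
  #|[set t : m.-tuple 'I_k | zigzag_from p x t]| = nzigzag k p m x.
Proof.
elim: m p x => [|m IH] p x; first by rewrite (card_tuple_nil (zigzag_from p x)).
rewrite (card_tuple_cons m (zigzag_from p x)) /=; apply: eq_bigr => y _.
by rewrite (card_andb _ (fun t : m.-tuple 'I_k => zigzag_from (~~ p) y t)) IH.
Qed.

Lemma zigzag_fromE k (x0 : 'I_k) p (x : 'I_k) (s : seq 'I_k) :
  zigzag_from p x s = all (fun i => zig (p (+) odd i) (nth x0 (x :: s) i)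
                                        (nth x0 (x :: s) i.+1)) (iota 0 (size s)).
Proof.
elim: s p x => [|y s IH] p x //=.
rewrite IH addbF -add1n iotaDl all_map; congr andb.
by apply: eq_all => i /=; rewrite addbN addNb.
Qed.

Lemma card_ffun_tuple (T : finType) M (Q : {ffun 'I_M -> T} -> bool) :
  #|[set f | Q f]| = #|[set t : M.-tuple T | Q [ffun i => tnth t i]]|.
Proof.
rewrite !card_set_sum (reindex (fun t : M.-tuple T => [ffun i => tnth t i])) //.
exists (fun f : {ffun 'I_M -> T} => [tuple f i | i < M]).
  by move=> t _; apply: eq_from_tnth => i; rewrite tnth_mktuple ffunE.
by move=> f _; apply/ffunP => i; rewrite ffunE tnth_mktuple.
Qed.

Lemma forall_consecutive (T : finType) (x0 : T) M (t : M.-tuple T)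
    (R : nat -> T -> T -> bool) :
  [forall i : 'I_M, forall j : 'I_M,
     (nat_of_ord j == i.+1) ==> R i (tnth t i) (tnth t j)]
  = all (fun i => R i (nth x0 t i) (nth x0 t i.+1)) (iota 0 M.-1).
Proof.
apply/forallP/allP.
  move=> H i; rewrite mem_iota add0n /= => lt_iM.
  have lt1 : i < M by lia.
  have lt2 : i.+1 < M by lia.
  have := forallP (H (Ordinal lt1)) (Ordinal lt2).
  by rewrite /= eqxx /= !(tnth_nth x0).
move=> H i; apply/forallP => j; apply/implyP => /eqP Hj.
have lt_jM := ltn_ord j.
have := H i; rewrite mem_iota add0n !(tnth_nth x0) Hj.
by apply; lia.
Qed.

(* The sequences counted by count_alt are the zigzags of length m+1 starting
   with a rise; the first value is free. *)
Lemma count_alt_nzigzag n k : 0 < n -> 0 < k ->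
  count_alt n k = \sum_(x < k) nzigzag k false (2 * n - 2) x.
Proof.
move=> n_gt0; case: k => [|k] // _; set m := 2 * n - 2.
rewrite /count_alt; have -> : 2 * n - 1 = m.+1 by rewrite /m; lia.
rewrite (card_ffun_tuple (fun f : {ffun 'I_m.+1 -> 'I_k.+1} =>
  [forall i : 'I_m.+1, forall j : 'I_m.+1, (nat_of_ord j == i.+1) ==>
     (if odd i then (f j <= f i) else (f i <= f j))])).
transitivity #|[set t : m.+1.-tuple 'I_k.+1 |
   (fun s : seq 'I_k.+1 => if s is x :: s' then zigzag_from false x s' else true) t]|.
  apply: eq_card => t; rewrite !inE.
  under eq_forallb => i do under eq_forallb => j do rewrite !ffunE.
  rewrite (forall_consecutive ord0 t (fun i a b => zig (odd i) a b)).
  case: t => -[|x s] //= /eqP[size_s].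
  by rewrite (zigzag_fromE ord0) size_s.
rewrite (card_tuple_cons m (fun s : seq 'I_k.+1 =>
           if s is x :: s' then zigzag_from false x s' else true)).
by apply: eq_bigr => x _; rewrite card_zigzag_from.
Qed.

Lemma nzigzag_reflect k p m x : x < k -> nzigzag k p m x = nzigzag k (~~ p) m (k.-1 - x).
Proof.
elim: m p x => [|m IH] p x lt_xk //=.
rewrite [RHS](reindex_inj rev_ord_inj) /=; apply: eq_bigr => y _.
have lt_yk := ltn_ord y.
rewrite (IH (~~ p) y lt_yk) !negbK.
have -> : k.-1 - y = k - y.+1 by lia.
by congr (_ * _); rewrite /zig; case: p => /=; congr nat_of_bool; apply/idP/idP; lia.
Qed.

Lemma sum_nzigzag_flip k m :
  \sum_(x < k) nzigzag k false m x = \sum_(x < k) nzigzag k true m x.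
Proof.
rewrite [RHS](reindex_inj rev_ord_inj) /=; apply: eq_bigr => x _.
by rewrite (nzigzag_reflect false m (ltn_ord x)) /=; congr nzigzag; have := ltn_ord x; lia.
Qed.

Local Open Scope ring_scope.

Lemma sum_indicator n a (G : nat -> rat) :
  \sum_(0 <= j < n) (if a == j then 1 else 0) * G j = if (a < n)%N then G a else 0.
Proof.
elim: n => [|n IH]; first by rewrite big_geq // ltn0.
rewrite big_nat_recr //= IH.
case: (ltngtP a n) => [lt_an|lt_na|->]; last by rewrite ltnSn mul1r add0r.
  by rewrite mul0r addr0 ltnS ltnW.
by rewrite mul0r addr0 ltnS leqNgt lt_na.
Qed.

Lemma indicator_andb (c b : bool) :
  (if c && b then 1 else 0 : rat) = (if c then 1 else 0) * (if b then 1 else 0).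
Proof. by case: c; case: b; rewrite ?mul1r ?mul0r. Qed.

Definition adj (i j : nat) : rat :=
  (if i.+1 == j then 1 else 0) + (if (0 < i)%N && (i.-1 == j) then 1 else 0).

Lemma adj_sum n i (G : nat -> rat) :
  \sum_(0 <= j < n) adj i j * G j =
  (if (i.+1 < n)%N then G i.+1 else 0) +
  (if (0 < i)%N then (if (i.-1 < n)%N then G i.-1 else 0) else 0).
Proof.
rewrite /adj; under eq_bigr do rewrite mulrDl indicator_andb -mulrA.
rewrite big_split /= sum_indicator -mulr_sumr sum_indicator.
by case: (0 < i)%N; rewrite ?mul1r ?mul0r.
Qed.

Definition adj_mx (K : nat) : 'M[rat]_K.+1 := \matrix_(i, j) adj i j.

Lemma npaths_out K N h : (K < h)%N -> npaths K N h = 0%N.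
Proof. by case: N => [|N] /= lt_Kh; [case: h lt_Kh|rewrite leqNgt lt_Kh]. Qed.

Lemma adj_mx_pow K N (i : 'I_K.+1) : (adj_mx K ^+ N) i 0 = (npaths K N i)%:R.
Proof.
elim: N i => [|N IH] i.
  rewrite expr0 mxE /=; case: (i =P 0) => [->|ne_i0] //=.
  by case: (nat_of_ord i =P 0%N) => // i0; case: ne_i0; apply: val_inj.
rewrite exprS -mulmxE mxE; under eq_bigr do rewrite mxE IH.
rewrite -(big_mkord xpredT (fun j => adj i j * (npaths K N j)%:R)) adj_sum /=.
have lt_iK := ltn_ord i; rewrite ltnS in lt_iK.
rewrite lt_iK mul1n natrD; case: ifP => [lt_i1K|].
  by congr (_ + _); case: ifP => _; rewrite ?mul0n // mul1n; case: ifP => //; lia.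
move=> /negbT; rewrite -leqNgt => le_Ki1.
have -> : i.+1 = K.+1 by apply/eqP; rewrite eqn_leq le_Ki1 ltnS lt_iK.
rewrite (@npaths_out K N K.+1) // add0r.
by case: ifP => _; rewrite ?mul0n // mul1n add0r; case: ifP => //; lia.
Qed.

Definition sgn (i : nat) : rat := if odd i./2 then -1 else 1.

Definition sign_mx (K : nat) : 'M[rat]_K.+1 := diag_mx (\row_(i < K.+1) sgn i).

Lemma sign_mx_invol K : sign_mx K * sign_mx K = 1.
Proof.
apply/matrixP => i j; rewrite /sign_mx -mulmxE mul_diag_mx !mxE.
case: (i =P j) => [->|_]; last by rewrite mulr0n mulr0.
by rewrite /sgn mulr1n; case: ifP; rewrite ?mulrNN mul1r.
Qed.

Lemma conj_invol_pow (R : nzRingType) (D X : R) N :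
  D * D = 1 -> (D * X * D) ^+ N = D * X ^+ N * D.
Proof.
move=> DD; elim: N => [|N IH]; first by rewrite !expr0 mulr1 DD.
by rewrite exprS IH !mulrA -(mulrA (D * X) D D) DD mulr1 -(mulrA D X) -exprS.
Qed.

Lemma conj_sign_entry K (X : 'M[rat]_K.+1) i j :
  (sign_mx K * X * sign_mx K) i j = sgn i * X i j * sgn j.
Proof. by rewrite /sign_mx -!mulmxE mul_mx_diag mul_diag_mx !mxE. Qed.

(* The signed adjacency matrix; its powers have the same (0,0) entries as
   those of adj_mx, since sgn 0 = 1. *)
Definition sadj_mx (K : nat) : 'M[rat]_K.+1 := sign_mx K * adj_mx K * sign_mx K.

Definition binv (i j : nat) : rat :=
  if (~~ odd i) && odd j && (i < j)%N then 1
  else if odd i && ~~ odd j && (j < i)%N then 1 else 0.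

Definition binv_mx (K : nat) : 'M[rat]_K.+1 := \matrix_(i, j) binv i j.

(* For K odd, binv_mx K is the inverse of the signed adjacency matrix:
   row i of the product is sgn i (sgn (i+1) binv (i+1) _ + sgn (i-1) binv (i-1) _),
   checked by cases on the parities of i and the column index. *)
Lemma sadj_binv k : sadj_mx k.*2.+1 * binv_mx k.*2.+1 = 1.
Proof.
apply/matrixP => i l; rewrite -mulmxE !mxE.
under eq_bigr do rewrite conj_sign_entry !mxE.
rewrite -(big_mkord xpredT (fun j => sgn i * adj i j * sgn j * binv j l)).
have regroup j : sgn i * adj i j * sgn j * binv j l = adj i j * (sgn i * sgn j * binv j l).
  by ring.
under eq_bigr do rewrite regroup.
rewrite adj_sum [i == l]/(nat_of_ord i == l).
have := ltn_ord i; have := ltn_ord l.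
move: (nat_of_ord i) (nat_of_ord l) => a b lt_b lt_a.
rewrite /sgn /binv (_ : ((a == b)%:R : rat) = if a == b then 1 else 0); last by case: eqP.
by repeat case: ifP => ?; first [ring | exfalso; lia].
Qed.

(* The first column of binv_mx^(m+1), indexed by i = 2x + parity: it counts
   the zigzags of length m continuing from the value x, the parities of i and
   m fixing whether the first relation is a rise or a fall. *)
Definition binv_col (k m i : nat) : nat :=
  if odd i then (if odd m then 0 else nzigzag k true m i./2)
  else (if odd m then nzigzag k false m i./2 else 0).

Lemma sum_double n (F : nat -> rat) :
  \sum_(0 <= j < n.*2) F j = \sum_(0 <= y < n) (F y.*2 + F y.*2.+1).
Proof.
elim: n => [|n IH]; first by rewrite !big_geq.
by rewrite doubleS !big_nat_recr //= IH addrA.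
Qed.

Lemma nat_of_boolE (b : bool) : ((b : nat)%:R : rat) = if b then 1 else 0.
Proof. by case: b. Qed.

Lemma binv_colS k m i : binv_col k m.+1 i =
  (\sum_(0 <= y < k)
     (if odd i then (if odd m then zig true i./2 y * nzigzag k false m y else 0)
      else (if odd m then 0 else zig false i./2 y * nzigzag k true m y)))%N.
Proof.
by rewrite /binv_col /=; case: (odd i); case: (odd m) => /=;
  rewrite ?big_mkord // big1.
Qed.

(* The entries of the powers of binv_mx count zigzag sequences: one step of
   the matrix product is one step of the recursion of nzigzag. *)
Lemma binv_mx_pow k m (i : 'I_(k.*2.+2)) :
  (binv_mx k.*2.+1 ^+ m.+1) i 0 = (binv_col k.+1 m i)%:R.
Proof.
elim: m i => [|m IH] i.
  rewrite expr1 mxE /binv /binv_col /=.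
  have := ltn_ord i; move: (nat_of_ord i) => a lt_a.
  by repeat case: ifP => ?; first [ring | exfalso; lia].
rewrite exprS -mulmxE mxE; under eq_bigr do rewrite mxE IH.
rewrite -(big_mkord xpredT (fun j => binv i j * (binv_col k.+1 m j)%:R)).
have := ltn_ord i; move: (nat_of_ord i) => a lt_a.
rewrite -doubleS sum_double binv_colS natr_sum; apply: eq_big_nat => y lt_y.
have half_even : (y.*2)./2 = y by lia.
have half_odd : (y.*2.+1)./2 = y by lia.
rewrite /binv_col /binv /zig half_even half_odd.
by repeat case: ifP => ?; rewrite ?natrM ?nat_of_boolE; repeat case: ifP => ?;
  first [ring | exfalso; lia].
Qed.

Definition recur (R : comNzRingType) (q : {poly R}) (e : int -> R) (N : int) : R :=
  \sum_(j < size q) q`_j * e (N - j%:Z).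

Lemma recur_ext (R : comNzRingType) (q : {poly R}) e1 e2 N :
  (forall M, e1 M = e2 M) -> recur q e1 N = recur q e2 N.
Proof. by move=> e12; apply: eq_bigr => j _; rewrite e12. Qed.

Lemma recur_eq0 (R : comNzRingType) (q : {poly R}) e N :
  (forall M, e M = 0) -> recur q e N = 0.
Proof. by move=> e0; rewrite /recur big1 // => j _; rewrite e0 mulr0. Qed.

Lemma recur_comm (R : comNzRingType) (q1 q2 : {poly R}) e N :
  recur q1 (recur q2 e) N = recur q2 (recur q1 e) N.
Proof.
rewrite /recur; under eq_bigr do rewrite mulr_sumr.
rewrite exchange_big /=; apply: eq_bigr => j _; rewrite mulr_sumr.
by apply: eq_bigr => l _; rewrite mulrCA; congr (_ * (_ * e _)); lia.
Qed.

Lemma recurB (R : comNzRingType) (q : {poly R}) e1 e2 N :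
  recur q (fun M => e1 M - e2 M) N = recur q e1 N - recur q e2 N.
Proof. by rewrite /recur -sumrB; apply: eq_bigr => j _; rewrite mulrBr. Qed.

Section RecurrenceUniqueness.
Variable R : idomainType.

(* Each step solves for the term of
   lowest index, whose coefficient is the leading coefficient of q. *)
Lemma recur_backward (q : {poly R}) (e : int -> R) (T : int) :
  q`_0 != 0 -> (forall N, recur q e N = 0) -> (forall N : int, T <= N -> e N = 0) ->
  forall N, e N = 0.
Proof.
move=> q0 e_rec e_tail.
have q_neq0 : q != 0 by apply: contraNneq q0 => ->; rewrite coef0.
set d := (size q).-1.
have size_q : size q = d.+1 by rewrite /d prednK // size_poly_gt0.
have lc_neq0 : q`_d != 0 by rewrite -lead_coefE lead_coef_eq0.
suff below m : forall N : int, T - m%:Z <= N -> e N = 0.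
  by move=> N; apply: (below `|T - N|%N); lia.
elim: m => [|m IH] N le_N; first by apply: e_tail; lia.
have [le_N'|lt_N] := boolP (T - m%:Z <= N); first exact: IH.
have := e_rec (N + d%:Z); rewrite /recur size_q big_ord_recr /=.
rewrite big1 ?add0r => [|j _]; last by rewrite IH ?mulr0 //; have := ltn_ord j; lia.
rewrite (_ : N + d%:Z - d%:Z = N); last by lia.
by move/eqP; rewrite mulf_eq0 (negbTE lc_neq0) /= => /eqP.
Qed.

(* Two sequences satisfying recurrences with nonvanishing constant terms and
   agreeing on the nonnegative indices agree everywhere: the backward
   extension does not depend on the chosen recurrence. *)
Lemma recur_unique (q1 q2 : {poly R}) (e1 e2 : int -> R) :
  q1`_0 != 0 -> q2`_0 != 0 ->
  (forall N, recur q1 e1 N = 0) -> (forall N, recur q2 e2 N = 0) ->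
  (forall n : nat, e1 n = e2 n) -> forall N, e1 N = e2 N.
Proof.
move=> q10 q20 rec1 rec2 e12; pose diff M := e1 M - e2 M.
have diff_nonneg (N : int) : 0 <= N -> diff N = 0.
  by case: N => // n _; rewrite /diff e12 subrr.
have diff_rec2 (N : int) : recur q2 diff N = 0.
  apply: (@recur_backward q1 _ ((size q2).-1)%:Z) => // [M|M le_M].
    rewrite (@recur_ext _ q1 _ (recur q2 e1)) => [|K]; last by rewrite recurB rec2 subr0.
    by rewrite recur_comm recur_eq0.
  rewrite /recur big1 // => j _; rewrite diff_nonneg ?mulr0 //.
  by have := ltn_ord j; move: le_M; set s := size _; lia.
move=> N; apply/eqP; rewrite -subr_eq0; apply/eqP.
exact: (@recur_backward q2 diff 0 q20 diff_rec2 diff_nonneg N).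
Qed.

End RecurrenceUniqueness.

Section TwoSidedPowers.
Variables (R : comNzRingType) (d : nat) (A B : 'M[R]_d.+1).
Hypothesis AB1 : A * B = 1.

Lemma BA1 : B * A = 1.
Proof. by move: AB1; rewrite -!mulmxE => /mulmx1C. Qed.

Definition zpow (N : int) : 'M[R]_d.+1 :=
  match N with Posz n => A ^+ n | Negz n => B ^+ n.+1 end.

Lemma zpowS N : zpow (N + 1) = zpow N * A.
Proof.
case: N => [n|[|n]].
- have -> : Posz n + 1 = Posz n.+1 by lia.
  by rewrite /= exprSr.
- have -> : Negz 0 + 1 = Posz 0 by lia.
  by rewrite /= expr0 expr1 BA1.
- have -> : Negz n.+1 + 1 = Negz n by lia.
  by rewrite /= [B ^+ n.+2]exprSr -mulrA BA1 mulr1.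
Qed.

Lemma zpowD N (m : nat) : zpow (N + m%:Z) = zpow N * A ^+ m.
Proof.
elim: m => [|m IH]; first by rewrite addr0 expr0 mulr1.
have -> : N + m.+1%:Z = (N + m%:Z) + 1 by lia.
by rewrite zpowS IH exprSr mulrA.
Qed.

Local Notation chi := (char_poly A).

Definition rchar : {poly R} := \poly_(j < d.+2) chi`_(d.+1 - j).

Lemma rchar0 : rchar`_0 = 1.
Proof.
rewrite coef_poly /= subn0.
have := char_poly_monic A.
by rewrite monicE lead_coefE size_char_poly => /eqP.
Qed.

Lemma cayley_hamilton_coef : \sum_(i < d.+2) chi`_i *: A ^+ i = 0.
Proof.
transitivity (horner_mx A chi); last exact: Cayley_Hamilton.
rewrite -[in RHS](coefK chi) poly_def rmorph_sum size_char_poly.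
apply: eq_bigr => i _.
by rewrite -[RHS]/(horner_mx A (chi`_i *: 'X^i)) horner_mxZ rmorphXn /= horner_mx_X.
Qed.

(* Multiplying Cayley-Hamilton by zpow (N - d - 1) shows that the integer
   powers of A satisfy the recurrence with polynomial rchar. *)
Lemma zpow_rec N : \sum_(j < size rchar) rchar`_j *: zpow (N - j%:Z) = 0.
Proof.
have size_rchar : (size rchar <= d.+2)%N by apply: size_poly.
rewrite (big_ord_widen _ (fun j => rchar`_j *: zpow (N - j%:Z)) size_rchar) big_mkcond /=.
transitivity (\sum_(j < d.+2) chi`_(d.+1 - j) *: (zpow (N - d.+1%:Z) * A ^+ (d.+1 - j))).
  apply: eq_bigr => j _; have lt_j := ltn_ord j.
  have rchar_j : rchar`_j = chi`_(d.+1 - j) by rewrite coef_poly ltn_ord.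
  case: ifP => [_|out_j]; last by rewrite -rchar_j nth_default ?scale0r // leqNgt out_j.
  by rewrite rchar_j -zpowD; congr (_ *: zpow _); rewrite -subzn //; ring.
under eq_bigr do rewrite scalerAr.
rewrite -mulr_sumr (reindex_inj rev_ord_inj) /=.
rewrite (eq_bigr (fun i : 'I_d.+2 => chi`_i *: A ^+ i)) ?cayley_hamilton_coef ?mulr0 //.
move=> j _; have lt_j := ltn_ord j.
by have -> : (d.+1 - (d.+2 - j.+1) = j)%N by lia.
Qed.

Lemma zpow_entry_rec i j N : recur rchar (fun M => zpow M i j) N = 0.
Proof.
have := congr1 (fun M : 'M[R]_d.+1 => M i j) (zpow_rec N).
by rewrite /= summxE mxE => <-; apply: eq_bigr => l _; rewrite mxE.
Qed.

End TwoSidedPowers.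

Section CExtension.
Variable k : nat.
Local Notation K := k.*2.+1.

Definition cext (N : int) : rat := zpow (sadj_mx K) (binv_mx K) N 0 0.

Lemma cext_nat (n : nat) : cext n = (C K n)%:R.
Proof.
rewrite /cext /= /sadj_mx conj_invol_pow ?sign_mx_invol // conj_sign_entry.
by rewrite adj_mx_pow /sgn /= mul1r mulr1 C_npaths.
Qed.

Lemma cext_rec N : recur (rchar (sadj_mx K)) cext N = 0.
Proof. exact: (zpow_entry_rec (sadj_binv k)). Qed.

Lemma cext_extends : extends_C K cext.
Proof.
split; first exact: cext_nat.
exists (rchar (sadj_mx K)); split; last exact: cext_rec.
split; first by rewrite rchar0 oner_neq0.
move=> N le_N; rewrite -[RHS](cext_rec N); apply: eq_bigr => j _.
have lt_j := ltn_ord j; rewrite subzn ?cext_nat //.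
by move: le_N lt_j; set s := size _; lia.
Qed.

(* At the negative even index -2(n+1), cext reads off the (0,0) entry of
   binv_mx^(2n+2), which counts the zigzags of length 2n+1. *)
Lemma cext_neg n : cext (- (2 * n.+1)%:Z) = (count_alt n.+1 k.+1)%:R.
Proof.
have -> : - (2 * n.+1)%:Z = Negz n.*2.+1 by rewrite NegzE; congr (- Posz _); lia.
rewrite /cext /= binv_mx_pow /binv_col /= odd_double /=.
rewrite count_alt_nzigzag // (_ : (2 * n.+1 - 2 = n.*2)%N); last by lia.
by rewrite sum_nzigzag_flip; congr (_%:R); apply: eq_bigr => y _; rewrite mul1n.
Qed.

End CExtension.

Lemma extends_C_unique K (c1 c2 : int -> rat) :
  extends_C K c1 -> extends_C K c2 -> forall N, c1 N = c2 N.
Proof.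
move=> [c1_nat [q1 [[q10 _] rec1]]] [c2_nat [q2 [[q20 _] rec2]]].
by apply: (recur_unique q10 q20 rec1 rec2) => n; rewrite c1_nat c2_nat.
Qed.

Theorem corollary13 (n k : nat) : (0 < n)%N -> (0 < k)%N ->
  (exists c : int -> rat, extends_C (2 * k - 1) c) /\
  (forall c : int -> rat, extends_C (2 * k - 1) c ->
     c (- (Posz (2 * n)))%R = ((count_alt n k)%:R)%R).
Proof.
case: n => [|n] // _; case: k => [|k] // _.
have -> : (2 * k.+1 - 1)%N = k.*2.+1 by lia.
split; first by exists (cext k); exact: cext_extends.
move=> c ext_c; rewrite (extends_C_unique ext_c (cext_extends k)).
exact: cext_neg.
Qed.
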